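(* Let $(\boldsymbol\Sigma,\sigma)$ be a primitive Markov subshift on a countable alphabet with associated set $\mathbb F$, and let $A\in C^0(\boldsymbol\Sigma)$ be bounded above, with summable variations ($\mathrm{Var}(A)<\infty$), and $\inf A|_{\bigcup_{i\in\mathbb F}[i]}>-\infty$. Then there exists a nonnegative, bounded, uniformly continuous function $u_A:\boldsymbol\Sigma\to\mathbb R_+$ with $A+u_A-u_A\circ\sigma\le\beta_A$, which is minimal in the sense that $u_A\le u$ for every nonnegative continuous sub-action $u$ of $A$, and which satisfies $\mathrm{Var}_k(u_A)\le\sum_{j\ge k}\mathrm{Var}_j(A)$ for all $k\ge1$.
   Context: Let $\mathbf M:\mathbb Z_+\times\mathbb Z_+\to\{0,1\}$ be a transition matrix. Put $\mathcal B_0=\{i:\mathbf M(i,j)=1\text{ for some }j\}$, $\mathcal B_n=\{i:\mathbf M(i,j)=1\text{ for some }j\in\mathcal B_{n-1}\}$. $\mathbf M$ is primitive if there exist $\mathbb F\subseteq\mathbb Z_+$ and an integer $K_0\ge0$ such that for all $i,j\in\bigcap_{n\ge0}\mathcal B_n$ there are $\ell_1,\dots,\ell_{K_0}\in\mathbb F$ with $\mathbf M(i,\ell_1)\mathbf M(\ell_1,\ell_2)\cdots\mathbf M(\ell_{K_0},j)=1$. $\boldsymbol\Sigma=\{\mathbf x\in\mathbb Z_+^{\mathbb Z_+}:\mathbf M(x_j,x_{j+1})=1\ \forall j\}$ with metric $d(\mathbf x,\mathbf y)=\lambda^{\min\{j:x_j\neq y_j\}}$, $\lambda\in(0,1)$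 fixed; $\sigma$ the left shift; $[i]=\{\mathbf x:x_0=i\}$. $C^0(\boldsymbol\Sigma)$ = continuous real functions. $\mathcal M_\sigma$ = $\sigma$-invariant Borel probabilities; $\beta_A=\sup_{\mu\in\mathcal M_\sigma}\int A\,d\mu$. $\mathrm{Var}_k(A)=\sup\{A(\mathbf x)-A(\mathbf y):d(\mathbf x,\mathbf y)\le\lambda^k\}$, $\mathrm{Var}(A)=\sum_{k\ge1}\mathrm{Var}_k(A)$. A sub-action for $A$ is a continuous $u$ with $A+u-u\circ\sigma\le\beta_A$ everywhere. *)

From Stdlib Require Import Reals List ClassicalEpsilon.
Import ListNotations.
Open Scope R_scope.

(** Transition matrix M : Z_+ x Z_+ -> {0,1}, encoded as a boolean matrix
    (true = 1). The alphabet Z_+ is encoded as nat. *)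

Fixpoint Bset (M : nat -> nat -> bool) (n : nat) (i : nat) : Prop :=
  match n with
  | O => exists j, M i j = true
  | S n' => exists j, Bset M n' j /\ M i j = true
  end.

Definition Binf (M : nat -> nat -> bool) (i : nat) : Prop := forall n, Bset M n i.

Definition primitive_with (M : nat -> nat -> bool) (F : nat -> Prop) (K0 : nat) : Prop :=
  forall i j, Binf M i -> Binf M j ->
    exists l : nat -> nat,
      l O = i /\ l (S K0) = j /\
      (forall k, (1 <= k <= K0)%nat -> F (l k)) /\
      (forall k, (k <= K0)%nat -> M (l k) (l (S k)) = true).

Definition Sigma (M : nat -> nat -> bool) : Type :=
  { x : nat -> nat | forall j, M (x j) (x (S j)) = true }.

Definition coord {M} (x : Sigma M) (j : nat) : nat := proj1_sig x j.

Definition shift {M} (x : Sigma M) : Sigma M :=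
  exist (fun y : nat -> nat => forall j, M (y j) (y (S j)) = true)
        (fun j => proj1_sig x (S j))
        (fun j => proj2_sig x (S j)).

(** d(x,y) <= lambda^k  iff  x_j = y_j for all j < k (for any fixed lambda in (0,1)). *)
Definition agree {M} (k : nat) (x y : Sigma M) : Prop :=
  forall j, (j < k)%nat -> coord x j = coord y j.

Definition continuous_S {M} (f : Sigma M -> R) : Prop :=
  forall x eps, 0 < eps -> exists k, forall y, agree k x y -> Rabs (f x - f y) < eps.

Definition unif_continuous_S {M} (f : Sigma M -> R) : Prop :=
  forall eps, 0 < eps -> exists k, forall x y, agree k x y -> Rabs (f x - f y) < eps.

Definition bounded_S {M} (f : Sigma M -> R) : Prop :=
  exists C, forall x, Rabs (f x) <= C.

Definition IsVar {M} (f : Sigma M -> R) (k : nat) (v : R) : Prop :=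
  is_lub (fun r => exists x y, agree k x y /\ r = f x - f y) v.

Definition is_open_S {M} (U : Sigma M -> Prop) : Prop :=
  forall x, U x -> exists k, forall y, agree k x y -> U y.

Inductive borel {M} : (Sigma M -> Prop) -> Prop :=
| borel_open : forall U, is_open_S U -> borel U
| borel_compl : forall E, borel E -> borel (fun x => ~ E x)
| borel_union : forall E : nat -> (Sigma M -> Prop),
    (forall n, borel (E n)) -> borel (fun x => exists n, E n x).

Definition is_prob_measure {M} (mu : (Sigma M -> Prop) -> R) : Prop :=
  (forall E, borel E -> 0 <= mu E) /\
  mu (fun _ => True) = 1 /\
  (forall E : nat -> (Sigma M -> Prop),
     (forall n, borel (E n)) ->
     (forall n m x, n <> m -> E n x -> E m x -> False) ->
     infinite_sum (fun n => mu (E n)) (mu (fun x => exists n, E n x))).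

Definition is_invariant {M} (mu : (Sigma M -> Prop) -> R) : Prop :=
  is_prob_measure mu /\
  (forall E, borel E -> mu (fun x => E (shift x)) = mu E).

(** Lebesgue integral of a nonnegative function: supremum of integrals of
    nonnegative simple functions below it. *)
Definition ind {M} (E : Sigma M -> Prop) (x : Sigma M) : R :=
  if excluded_middle_informative (E x) then 1 else 0.

Definition simple_val {M} (l : list (R * (Sigma M -> Prop))) (x : Sigma M) : R :=
  fold_right (fun p acc => fst p * ind (snd p) x + acc) 0 l.

Definition simple_int {M} (mu : (Sigma M -> Prop) -> R) (l : list (R * (Sigma M -> Prop))) : R :=
  fold_right (fun p acc => fst p * mu (snd p) + acc) 0 l.

Definition lower_simple_integrals {M} (mu : (Sigma M -> Prop) -> R) (g : Sigma M -> R) (r : R) : Prop :=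
  exists l : list (R * (Sigma M -> Prop)),
    Forall (fun p => 0 <= fst p /\ borel (snd p)) l /\
    (forall x, simple_val l x <= g x) /\
    r = simple_int mu l.

(** [integral_is mu A r]: A is bounded above and its integral w.r.t. mu is
    the finite real r, i.e. int A dmu = C - int (C - A) dmu = r. *)
Definition integral_is {M} (mu : (Sigma M -> Prop) -> R) (A : Sigma M -> R) (r : R) : Prop :=
  exists C, (forall x, A x <= C) /\
    is_lub (lower_simple_integrals mu (fun x => C - A x)) (C - r).

(** [le_beta A c] : c <= beta_A = sup_{mu invariant} int A dmu  (sup in [-oo,+oo]). *)
Definition le_beta {M} (A : Sigma M -> R) (c : R) : Prop :=
  forall c', c' < c -> exists mu r, is_invariant mu /\ integral_is mu A r /\ c' < r.

Definition sub_action {M} (A u : Sigma M -> R) : Prop :=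
  continuous_S u /\ forall x, le_beta A (A x + u x - u (shift x)).

(** Let [phi := A - beta_A].  The sub-action is the Mañé-type potential
      [uA x := sup { S_n phi y | n >= 0, sigma^n y = x }],
    the supremum of the Birkhoff sums of [phi] along all backward orbits
    ending at [x] ([n = 0] gives [uA >= 0]). *)

From Pilot Require Import Defs.
From Stdlib Require Import Reals.
From Stdlib Require Import Lra Lia SeqProp Classical ClassicalEpsilon FunctionalExtensionality ProofIrrelevance.
Open Scope R_scope.

Fixpoint fsum (f : nat -> R) (n : nat) : R :=
  match n with O => 0 | S n' => fsum f n' + f n' end.

Lemma fsum_ext f g n : (forall i, (i < n)%nat -> f i = g i) -> fsum f n = fsum g n.
Proof.
  induction n as [|n IH]; intros H; simpl; [reflexivity|].
  rewrite IH by (intros; apply H; lia). rewrite H by lia. reflexivity.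
Qed.

Lemma fsum_le f g n : (forall i, (i < n)%nat -> f i <= g i) -> fsum f n <= fsum g n.
Proof.
  induction n as [|n IH]; intros H; simpl; [lra|].
  assert (f n <= g n) by (apply H; lia).
  assert (fsum f n <= fsum g n) by (apply IH; intros; apply H; lia).
  lra.
Qed.

Lemma fsum_plus f g n : fsum (fun i => f i + g i) n = fsum f n + fsum g n.
Proof. induction n as [|n IH]; simpl; [lra|]. rewrite IH. lra. Qed.

Lemma fsum_scal a f n : fsum (fun i => a * f i) n = a * fsum f n.
Proof. induction n as [|n IH]; simpl; [lra|]. rewrite IH. lra. Qed.

Lemma fsum_const a n : fsum (fun _ => a) n = INR n * a.
Proof. induction n as [|n IH]; simpl fsum; [simpl; lra|]. rewrite IH, S_INR. lra. Qed.

Lemma fsum_shift g n : fsum g (S n) = g O + fsum (fun i => g (S i)) n.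
Proof. induction n as [|n IH]; simpl in *; [lra|]. rewrite IH. lra. Qed.

Lemma fsum_split g a b : fsum g (a + b) = fsum g a + fsum (fun j => g (a + j)%nat) b.
Proof.
  induction b as [|b IH]; simpl; [rewrite Nat.add_0_r; lra|].
  rewrite Nat.add_succ_r. simpl. rewrite IH. lra.
Qed.

Lemma fsum_nonneg f n : (forall i, (i < n)%nat -> 0 <= f i) -> 0 <= fsum f n.
Proof.
  intros H. replace 0 with (fsum (fun _ => 0) n) by (rewrite fsum_const; lra).
  apply fsum_le; auto.
Qed.

(** The library partial sums [sum_f_R0 g n] have [n + 1] terms. *)
Lemma fsum_sum_f g n : fsum g (S n) = sum_f_R0 g n.
Proof. induction n as [|n IH]; simpl in *; [lra|]. rewrite <- IH. simpl. lra. Qed.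

Lemma partial_le_lim g s : (forall i, 0 <= g i) -> infinite_sum g s -> forall n, fsum g n <= s.
Proof.
  intros Hg Hs n.
  assert (Hgrow : Un_growing (sum_f_R0 g)) by (intro m; simpl; specialize (Hg (S m)); lra).
  destruct n as [|n].
  - assert (H := growing_ineq _ _ Hgrow Hs 0%nat). simpl in *. specialize (Hg O). lra.
  - rewrite fsum_sum_f. exact (growing_ineq _ _ Hgrow Hs n).
Qed.

Lemma summable_tail_small g s : (forall i, 0 <= g i) -> infinite_sum g s ->
  forall eps, 0 < eps -> exists N, forall m, (N <= m)%nat ->
    forall n, fsum (fun j => g (m + j)%nat) n <= eps.
Proof.
  intros Hg Hs eps Heps. destruct (Hs eps Heps) as [N HN].
  specialize (HN N (le_n _)). unfold R_dist in HN. rewrite <- fsum_sum_f in HN.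
  exists (S N). intros m Hm n.
  assert (Hhead := fsum_split g (S N) (m - S N)).
  replace (S N + (m - S N))%nat with m in Hhead by lia.
  assert (0 <= fsum (fun j => g (S N + j)%nat) (m - S N)) by (apply fsum_nonneg; auto).
  assert (Htot := partial_le_lim g s Hg Hs (m + n)). rewrite fsum_split in Htot.
  assert (fsum g (S N) <= s) by (apply partial_le_lim; auto).
  rewrite Rabs_left1 in HN by lra. lra.
Qed.

Fixpoint itr {M} (n : nat) (x : Sigma M) : Sigma M :=
  match n with O => x | S n' => shift (itr n' x) end.

Lemma coord_itr {M} n (x : Sigma M) j : coord (itr n x) j = coord x (n + j).
Proof.
  revert j; induction n as [|n IH]; intros j; [reflexivity|].
  simpl. unfold coord in *. simpl. rewrite IH. f_equal. lia.
Qed.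

Lemma sig_ext {M} (x y : Sigma M) : (forall j, coord x j = coord y j) -> x = y.
Proof.
  destruct x as [f hf], y as [g hg]; unfold coord; simpl; intros H.
  assert (f = g) by (apply functional_extensionality; auto). subst.
  f_equal. apply proof_irrelevance.
Qed.

Lemma itr_add {M} a b (x : Sigma M) : itr b (itr a x) = itr (a + b) x.
Proof. apply sig_ext; intro j. rewrite !coord_itr. f_equal. lia. Qed.

Lemma itr_S' {M} n (x : Sigma M) : itr (S n) x = itr n (shift x).
Proof. apply sig_ext; intro j. rewrite !coord_itr. unfold coord; simpl. f_equal. Qed.

Lemma agree_shift {M} k (x y : Sigma M) : agree (S k) x y -> agree k (shift x) (shift y).
Proof. intros H j Hj. unfold coord; simpl. apply (H (S j)). lia. Qed.

Lemma agree_sym {M} k (x y : Sigma M) : agree k x y -> agree k y x.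
Proof. intros H j Hj. symmetry. auto. Qed.

Lemma Binf_coord {M} (x : Sigma M) j : Binf M (coord x j).
Proof.
  intro n. revert j. induction n as [|n IH]; intros j; simpl;
    exists (coord x (S j)); [|split; auto]; apply (proj2_sig x).
Qed.

Fixpoint bsum {M} (f : Sigma M -> R) (n : nat) (y : Sigma M) : R :=
  match n with O => 0 | S n' => f y + bsum f n' (shift y) end.

Lemma bsum_fsum {M} (f : Sigma M -> R) n y : bsum f n y = fsum (fun i => f (itr i y)) n.
Proof.
  revert y; induction n as [|n IH]; intros y; [reflexivity|].
  rewrite fsum_shift. simpl bsum. rewrite IH. f_equal.
  apply fsum_ext. intros i _. rewrite itr_S'. reflexivity.
Qed.

Lemma bsum_S_r {M} (f : Sigma M -> R) n y : bsum f (S n) y = bsum f n y + f (itr n y).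
Proof. rewrite !bsum_fsum. reflexivity. Qed.

Lemma bsum_add {M} (f : Sigma M -> R) a b y :
  bsum f (a + b) y = bsum f a y + bsum f b (itr a y).
Proof.
  rewrite !bsum_fsum, fsum_split. f_equal. apply fsum_ext. intros i _.
  rewrite itr_add. reflexivity.
Qed.

Lemma bsum_sub {M} (f : Sigma M -> R) b n y :
  bsum (fun x => f x - b) n y = bsum f n y - INR n * b.
Proof.
  rewrite !bsum_fsum.
  induction n as [|n IH]; simpl fsum; [simpl; lra|]. rewrite IH, S_INR. lra.
Qed.

Lemma bsum_lower {M} (f : Sigma M -> R) c m w :
  (forall i, (i < m)%nat -> c <= f (itr i w)) -> INR m * c <= bsum f m w.
Proof. intros H. rewrite bsum_fsum, <- fsum_const. apply fsum_le. auto. Qed.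

Definition var_bounded {M} (f : Sigma M -> R) (W : nat -> R) : Prop :=
  forall m, (1 <= m)%nat -> forall x y : Sigma M, agree m x y -> f x - f y <= W m.

Lemma var_bounded_sub_const {M} (f : Sigma M -> R) W b :
  var_bounded f W -> var_bounded (fun x => f x - b) W.
Proof. intros H m Hm x y Hxy. specialize (H m Hm x y Hxy). lra. Qed.

Lemma bsum_compare {M} (f : Sigma M -> R) W k : var_bounded f W ->
  forall n y y', agree (n + k) y y' ->
  bsum f n y - bsum f n y' <= fsum (fun j => W (k + 1 + j)%nat) n.
Proof.
  intros HW n. induction n as [|n IH]; intros y y' H; simpl; [lra|].
  assert (h1 := HW (S n + k)%nat ltac:(lia) y y' H).
  assert (h2 := IH (shift y) (shift y') (agree_shift _ _ _ H)).
  replace (k + 1 + n)%nat with (S n + k)%nat by lia. lra.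
Qed.

Lemma IsVar_upper {M} (f : Sigma M -> R) k v :
  IsVar f k v -> forall x y, agree k x y -> f x - f y <= v.
Proof. intros H x y Hxy. apply (proj1 H). eauto. Qed.

(** A least upper bound of the empty set cannot exist, so a variation being
    defined forces the shift space to be non-empty. *)
Lemma IsVar_inhabited {M} (f : Sigma M -> R) k v : IsVar f k v -> inhabited (Sigma M).
Proof.
  intros [_ Hlub]. apply NNPP; intro Hn.
  assert (v <= v - 1) by (apply Hlub; intros r [x _]; exfalso; apply Hn; exact (inhabits x)).
  lra.
Qed.

Lemma IsVar_nonneg {M} (f : Sigma M -> R) k v : IsVar f k v -> 0 <= v.
Proof.
  intros H. destruct (IsVar_inhabited f k v H) as [x0].
  assert (Hx := IsVar_upper f k v H x0 x0 (fun _ _ => eq_refl)). lra.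
Qed.

Lemma IsVar_exists_le {M} (f : Sigma M -> R) k t : inhabited (Sigma M) ->
  (forall x y, agree k x y -> f x - f y <= t) -> exists v, IsVar f k v /\ v <= t.
Proof.
  intros [x0] Ht.
  set (D := fun r => exists x y : Sigma M, agree k x y /\ r = f x - f y).
  assert (HD : exists r, D r) by (exists 0; exists x0, x0; split; [intros ? ?; reflexivity|ring]).
  assert (Hb : bound D) by (exists t; intros r [x [y [Hxy ->]]]; auto).
  destruct (completeness D Hb HD) as [v Hv].
  exists v. split; [exact Hv|]. apply Hv. intros r [x [y [Hxy ->]]]. auto.
Qed.

(** ** Invariant measures on periodic orbits *)

Lemma ind_t {M} (E : Sigma M -> Prop) x : E x -> Defs.ind E x = 1.
Proof. unfold Defs.ind; destruct excluded_middle_informative; tauto. Qed.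
Lemma ind_f {M} (E : Sigma M -> Prop) x : ~ E x -> Defs.ind E x = 0.
Proof. unfold Defs.ind; destruct excluded_middle_informative; tauto. Qed.
Lemma ind_nn {M} (E : Sigma M -> Prop) x : 0 <= Defs.ind E x.
Proof. unfold Defs.ind; destruct excluded_middle_informative; lra. Qed.

Lemma infinite_sum_zero : infinite_sum (fun _ => 0) 0.
Proof.
  intros eps Heps. exists O. intros n _.
  assert (sum_f_R0 (fun _ => 0) n = 0) by (induction n; simpl; lra).
  unfold R_dist. rewrite H, Rminus_diag, Rabs_R0. lra.
Qed.

Lemma inf_sum_ind {M} (E : nat -> Sigma M -> Prop) w
  (Hd : forall n m x, n <> m -> E n x -> E m x -> False) :
  infinite_sum (fun n => Defs.ind (E n) w) (Defs.ind (fun x => exists n, E n x) w).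
Proof.
  destruct (classic (exists n, E n w)) as [[m0 Hm0]|Hn].
  - rewrite ind_t by eauto.
    assert (Hg : forall n, Defs.ind (E n) w = if Nat.eq_dec n m0 then 1 else 0).
    { intro n. destruct (Nat.eq_dec n m0); [subst; apply ind_t; auto|].
      apply ind_f. intro. eapply Hd; eauto. }
    assert (Hs : forall N, sum_f_R0 (fun n => Defs.ind (E n) w) N = if Nat.leb m0 N then 1 else 0).
    { induction N as [|N IH]; cbn [sum_f_R0]; rewrite Hg.
      - destruct (Nat.eq_dec 0 m0); destruct m0; simpl; try (exfalso; lia); reflexivity.
      - rewrite IH. destruct (Nat.eq_dec (S N) m0) as [e|ne].
        + subst. destruct (Nat.leb_spec (S N) N); [lia|].
          destruct (Nat.leb_spec (S N) (S N)); [lra|lia].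
        + destruct (Nat.leb_spec m0 N); destruct (Nat.leb_spec m0 (S N)); try lra; lia. }
    intros eps Heps. exists m0. intros n Hn. rewrite Hs.
    rewrite (proj2 (Nat.leb_le m0 n)) by lia. unfold R_dist. rewrite Rminus_diag, Rabs_R0. lra.
  - rewrite ind_f by auto.
    assert (Hs : forall N, sum_f_R0 (fun n => Defs.ind (E n) w) N = 0).
    { induction N; simpl; rewrite ind_f; try lra; intro; apply Hn; eauto. }
    intros eps Heps. exists O. intros n _. rewrite Hs.
    unfold R_dist. rewrite Rminus_diag, Rabs_R0. lra.
Qed.

Lemma inf_sum_fsum (f : nat -> nat -> R) (L : nat -> R) p :
  (forall i, infinite_sum (fun m => f m i) (L i)) ->
  infinite_sum (fun m => fsum (f m) p) (fsum L p).
Proof.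
  intros H. induction p as [|p IH]; [exact infinite_sum_zero|].
  intros eps Heps. destruct (CV_plus _ _ _ _ IH (H p) eps Heps) as [N HN].
  exists N. intros n Hn. simpl. rewrite sum_plus. apply HN; auto.
Qed.

Lemma inf_sum_scal (g : nat -> R) l a :
  infinite_sum g l -> infinite_sum (fun n => a * g n) (a * l).
Proof.
  intros H eps Heps.
  assert (Hc : Un_cv (fun _ => a) a)
    by (intros e He; exists O; intros; unfold R_dist; rewrite Rminus_diag, Rabs_R0; lra).
  destruct (CV_mult _ _ _ _ Hc H eps Heps) as [N HN].
  exists N. intros n Hn.
  replace (sum_f_R0 (fun n0 => a * g n0) n) with (a * sum_f_R0 g n); [apply HN; auto|].
  rewrite scal_sum. apply sum_eq. intros; ring.
Qed.

Definition orbit_measure {M} (z : Sigma M) (p : nat) (E : Sigma M -> Prop) : R :=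
  / INR p * fsum (fun i => Defs.ind E (itr i z)) p.

Lemma orbit_measure_invariant {M} (z : Sigma M) p :
  (1 <= p)%nat -> itr p z = z -> is_invariant (orbit_measure z p).
Proof.
  intros Hp Hz. assert (HP : 0 < INR p) by (apply lt_0_INR; lia).
  split; [split; [|split]|]; unfold orbit_measure.
  - intros E _. apply Rmult_le_pos; [left; apply Rinv_0_lt_compat; auto|].
    apply fsum_nonneg. intros; apply ind_nn.
  - rewrite (fsum_ext _ (fun _ => 1)) by (intros; apply ind_t; auto).
    rewrite fsum_const. field. lra.
  - intros E _ Hd. apply inf_sum_scal.
    apply (inf_sum_fsum (fun m i => Defs.ind (E m) (itr i z))).
    intro i. apply inf_sum_ind; auto.
  - intros E _. f_equal.
    set (g := fun i => Defs.ind E (itr i z)).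
    change (fsum (fun i => g (S i)) p = fsum g p).
    assert (H := fsum_shift g p). cbn [fsum] in H.
    assert (g p = g O) by (unfold g; rewrite Hz; reflexivity). lra.
Qed.

Lemma orbit_measure_simple {M} (z : Sigma M) p l :
  simple_int (orbit_measure z p) l = / INR p * fsum (fun i => simple_val l (itr i z)) p.
Proof.
  induction l as [|[a E] l IH]; simpl.
  - rewrite fsum_const. lra.
  - rewrite IH. unfold orbit_measure. rewrite fsum_plus, fsum_scal. simpl. lra.
Qed.

(** ** The ergodic maximum *)

(** [MeasSet A r]: [r] is the integral of [A] against some invariant measure;
    [beta_A] is the supremum of this set. *)
Definition MeasSet {M} (A : Sigma M -> R) (r : R) : Prop :=
  exists mu, is_invariant mu /\ integral_is mu A r.

Lemma periodic_meas {M} (A : Sigma M -> R) (Ca : R) (HCa : forall x, A x <= Ca)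
  (z : Sigma M) p : (1 <= p)%nat -> itr p z = z ->
  exists r, MeasSet A r /\ bsum A p z / INR p <= r.
Proof.
  intros Hp Hz. assert (HP : 0 < INR p) by (apply lt_0_INR; lia).
  set (Lset := lower_simple_integrals (orbit_measure z p) (fun x => Ca - A x)).
  set (Bd := / INR p * fsum (fun i => Ca - A (itr i z)) p).
  assert (Hub : forall r, Lset r -> r <= Bd).
  { intros r [l [_ [Hl ->]]]. rewrite orbit_measure_simple. unfold Bd.
    apply Rmult_le_compat_l; [left; apply Rinv_0_lt_compat; auto|].
    apply fsum_le. intros; apply Hl. }
  assert (Hne : exists r, Lset r).
  { exists 0, nil. repeat split; auto. intros x; simpl. specialize (HCa x). lra. }
  destruct (completeness Lset (ex_intro _ Bd Hub) Hne) as [L0 HL0].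
  exists (Ca - L0). split.
  - exists (orbit_measure z p). split; [apply orbit_measure_invariant; auto|].
    exists Ca. split; auto. replace (Ca - (Ca - L0)) with L0 by ring. exact HL0.
  - assert (HL0B : L0 <= Bd) by (apply HL0; exact Hub).
    assert (HBd : Bd = Ca - bsum A p z / INR p).
    { unfold Bd. rewrite bsum_fsum.
      rewrite (fsum_ext _ (fun i => Ca + -1 * A (itr i z))) by (intros; ring).
      rewrite fsum_plus, fsum_const, fsum_scal. field. lra. }
    lra.
Qed.

Lemma integral_le_bound {M} (A : Sigma M -> R) (Ca : R) (HCa : forall x, A x <= Ca) mu r :
  is_prob_measure mu -> integral_is mu A r -> r <= Ca.
Proof.
  intros [_ [H1 _]] [C [HC Hlub]].
  destruct (Rle_dec C Ca).
  - assert (0 <= C - r); [|lra].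
    apply Hlub. exists nil. repeat split; auto. intros x; simpl. specialize (HC x). lra.
  - assert (C - Ca <= C - r); [|lra].
    apply Hlub. exists (cons (C - Ca, fun _ : Sigma M => True) nil). split; [|split].
    + constructor; [|constructor]. simpl. split; [lra|].
      apply borel_open. intros x _. exists O. auto.
    + intros x. simpl. rewrite ind_t by auto. specialize (HCa x). lra.
    + simpl. rewrite H1. ring.
Qed.

Section ErgodicMaximum.
Variables (M : nat -> nat -> bool) (A : Sigma M -> R) (beta : R).
Hypothesis Hbeta : is_lub (MeasSet A) beta.

Lemma le_beta_iff c : le_beta A c <-> c <= beta.
Proof.
  split.
  - intros H. destruct (Rle_dec c beta) as [|hn]; auto. exfalso.
    destruct (H beta ltac:(lra)) as [mu [r [Hi [Hint Hr]]]].
    assert (r <= beta) by (apply Hbeta; exists mu; auto). lra.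
  - intros H c' Hc'. apply NNPP; intro Hn.
    assert (beta <= c'); [|lra].
    apply Hbeta. intros r [mu [Hi Hint]]. apply Rnot_lt_le. intro Hlt.
    apply Hn. exists mu, r. auto.
Qed.

Lemma sub_action_iff w :
  sub_action A w <-> continuous_S w /\ forall x, A x - beta <= w (shift x) - w x.
Proof.
  unfold sub_action. split; intros [Hw H]; split; auto; intros x.
  - specialize (H x). rewrite le_beta_iff in H. lra.
  - rewrite le_beta_iff. specialize (H x). lra.
Qed.

Lemma periodic_birkhoff_le (Ca : R) (HCa : forall x, A x <= Ca) z p :
  (1 <= p)%nat -> itr p z = z -> bsum A p z <= INR p * beta.
Proof.
  intros Hp Hz. destruct (periodic_meas A Ca HCa z p Hp Hz) as [r [Hr Hle]].
  assert (r <= beta) by (apply Hbeta; auto).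
  assert (0 < INR p) by (apply lt_0_INR; lia).
  assert (Havg : bsum A p z / INR p <= beta) by lra.
  apply (Rmult_le_compat_l (INR p)) in Havg; [|lra].
  field_simplify in Havg; lra.
Qed.

End ErgodicMaximum.

Lemma ergodic_max_exists {M} (A : Sigma M -> R) (Ca : R) (HCa : forall x, A x <= Ca)
  (z : Sigma M) p : (1 <= p)%nat -> itr p z = z -> exists beta, is_lub (MeasSet A) beta.
Proof.
  intros Hp Hz.
  destruct (periodic_meas A Ca HCa z p Hp Hz) as [r0 [Hr0 _]].
  assert (Hb : bound (MeasSet A)).
  { exists Ca. intros r [mu [[Hmu _] Hint]]. exact (integral_le_bound A Ca HCa mu r Hmu Hint). }
  destruct (completeness _ Hb (ex_intro _ r0 Hr0)) as [beta Hbeta]. eauto.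
Qed.

(** ** Closing words in a primitive shift *)

(** A word [y_0 .. y_(n-1)] followed by an admissible path
    [y_(n-1) = l_0, l_1, .., l_K0, l_(K0+1) = y_0] is the period of a periodic
    point [z] of period [n + K0] which agrees with [y] on [n] symbols. *)
Lemma periodic_point {M} (P : nat -> Prop) (y : Sigma M) n K0 (l : nat -> nat) :
  (1 <= n)%nat -> l O = coord y (n - 1) -> l (S K0) = coord y O ->
  (forall k, (1 <= k <= K0)%nat -> P (l k)) ->
  (forall k, (k <= K0)%nat -> M (l k) (l (S k)) = true) ->
  exists z : Sigma M, itr (n + K0) z = z /\ agree n y z /\
    forall i, (i < K0)%nat -> P (coord (itr (n + i) z) O).
Proof.
  intros Hn Hl0 HlK HP HMl.
  set (p := (n + K0)%nat).
  set (w := fun i => if Nat.ltb i n then coord y i else l (i - n + 1)%nat).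
  assert (Hp : p <> O) by (unfold p; lia).
  assert (Hw : forall r, (r < p)%nat -> M (w r) (w ((r + 1) mod p)) = true).
  { intros r Hr. unfold w.
    destruct (Nat.eq_dec (r + 1) p) as [e|ne].
    - rewrite e, Nat.Div0.mod_same. destruct (Nat.ltb_spec 0 n); [|lia].
      rewrite <- HlK.
      destruct (Nat.ltb_spec r n).
      + assert (K0 = O) by (unfold p in e; lia). subst K0.
        replace r with (n - 1)%nat by (unfold p in e; lia). rewrite <- Hl0. apply HMl. lia.
      + replace (r - n + 1)%nat with K0 by (unfold p in e; lia). apply HMl. lia.
    - rewrite Nat.mod_small by lia.
      destruct (Nat.ltb_spec r n); destruct (Nat.ltb_spec (r + 1) n).
      + replace (r + 1)%nat with (S r) by lia. apply (proj2_sig y).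
      + replace (r + 1 - n + 1)%nat with 1%nat by lia. replace r with (n - 1)%nat by lia.
        rewrite <- Hl0. apply HMl. lia.
      + lia.
      + replace (r + 1 - n + 1)%nat with (S (r - n + 1)) by lia. apply HMl. unfold p in Hr. lia. }
  assert (Hz : forall j, M (w (j mod p)) (w (S j mod p)) = true).
  { intro j. replace (S j) with (j + 1)%nat by lia. rewrite <- Nat.Div0.add_mod_idemp_l.
    apply Hw. apply Nat.mod_upper_bound; auto. }
  exists (exist _ (fun j => w (j mod p)) Hz). split; [|split].
  - apply sig_ext. intro j. rewrite coord_itr. unfold coord; cbn [proj1_sig].
    replace (p + j)%nat with (j + 1 * p)%nat by lia. rewrite Nat.Div0.mod_add. reflexivity.
  - intros j Hj. unfold coord; cbn [proj1_sig]. rewrite Nat.mod_small by (unfold p; lia).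
    unfold w. destruct (Nat.ltb_spec j n); [reflexivity|lia].
  - intros i Hi. rewrite coord_itr. unfold coord; cbn [proj1_sig].
    rewrite Nat.mod_small by (unfold p; lia).
    unfold w. destruct (Nat.ltb_spec (n + i + 0) n); [lia|]. apply HP. lia.
Qed.

Lemma closing_lemma {M} (F : nat -> Prop) K0 : primitive_with M F K0 ->
  forall (y : Sigma M) n, (1 <= n)%nat ->
  exists z : Sigma M, itr (n + K0) z = z /\ agree n y z /\
    forall i, (i < K0)%nat -> F (coord (itr (n + i) z) O).
Proof.
  intros HM y n Hn.
  destruct (HM (coord y (n - 1)) (coord y 0) (Binf_coord _ _) (Binf_coord _ _))
    as [l [H1 [H2 [H3 H4]]]].
  apply (periodic_point F y n K0 l); auto.
Qed.

Lemma extend_point {M} (y x x' : Sigma M) n k : (1 <= k)%nat -> itr n y = x -> agree k x x' ->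
  exists y' : Sigma M, itr n y' = x' /\ agree (n + k) y y'.
Proof.
  intros Hk Hy Ha.
  set (f := fun j => if Nat.ltb j n then coord y j else coord x' (j - n)).
  assert (Hf : forall j, M (f j) (f (S j)) = true).
  { intro j. unfold f. destruct (Nat.ltb_spec j n); destruct (Nat.ltb_spec (S j) n).
    - apply (proj2_sig y).
    - replace (S j - n)%nat with O by lia. rewrite <- Ha by lia. rewrite <- Hy, coord_itr.
      replace (n + 0)%nat with (S j) by lia. apply (proj2_sig y).
    - lia.
    - replace (S j - n)%nat with (S (j - n)) by lia. apply (proj2_sig x'). }
  exists (exist _ f Hf). split.
  - apply sig_ext. intro j. rewrite coord_itr. unfold coord at 1; cbn [proj1_sig]. unfold f.
    destruct (Nat.ltb_spec (n + j) n); [lia|]. f_equal. lia.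
  - intros j Hj. unfold coord at 2; cbn [proj1_sig]. unfold f.
    destruct (Nat.ltb_spec j n); [reflexivity|].
    rewrite <- Ha by lia. rewrite <- Hy, coord_itr. f_equal. lia.
Qed.

Definition backward_sums {M} (phi : Sigma M -> R) (x : Sigma M) (r : R) : Prop :=
  exists n y, itr n y = x /\ r = bsum phi n y.

(** Uniform bound on backward sums of [A - beta]: close the orbit segment
    into a periodic point, use [S_p A <= p * beta] on it, the lower bound [c]
    on the [K0] closing symbols in [F] and Bowen's estimate. *)
Lemma backward_sums_bounded {M} (F : nat -> Prop) K0 (HM : primitive_with M F K0)
  (A : Sigma M -> R) beta (Ca c s : R) (V : nat -> R)
  (Hper : forall z p, (1 <= p)%nat -> itr p z = z -> bsum A p z <= INR p * beta)
  (Hc : forall x : Sigma M, F (coord x 0) -> c <= A x)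
  (HV : var_bounded A V) (Hpart : forall n, fsum (fun j => V (S j)) n <= s) :
  forall x r, backward_sums (fun w => A w - beta) x r -> r <= Rmax 0 (INR K0 * (beta - c) + s).
Proof.
  intros x r [n [y [_ ->]]]. destruct n as [|n]; [simpl; apply Rmax_l|].
  eapply Rle_trans; [|apply Rmax_r].
  destruct (closing_lemma F K0 HM y (S n) ltac:(lia)) as [z [Hz [Hag HF]]].
  assert (Hperz := Hper z (S n + K0)%nat ltac:(lia) Hz).
  rewrite bsum_add, plus_INR in Hperz.
  assert (Hclose : INR K0 * c <= bsum A K0 (itr (S n) z)).
  { apply bsum_lower. intros i Hi. rewrite itr_add. apply Hc, HF; auto. }
  assert (Hcomp := bsum_compare A V O HV (S n) y z ltac:(rewrite Nat.add_0_r; auto)).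
  rewrite (fsum_ext _ (fun j => V (S j))) in Hcomp by (intros; f_equal; lia).
  specialize (Hpart (S n)).
  rewrite bsum_sub. lra.
Qed.

Lemma backward_sup_exists {M} (phi : Sigma M -> R) (B : R) :
  (forall x r, backward_sums phi x r -> r <= B) ->
  exists u : Sigma M -> R, forall x, is_lub (backward_sums phi x) (u x).
Proof.
  intros HB.
  assert (Hne : forall x, exists r, backward_sums phi x r)
    by (intros x; exists 0, O, x; split; reflexivity).
  exists (fun x => proj1_sig (completeness _ (ex_intro _ B (HB x)) (Hne x))).
  intros x. destruct completeness; assumption.
Qed.

(** ** The supremum of backward Birkhoff sums *)

Section BackwardSupremum.
Variables (M : nat -> nat -> bool) (phi u : Sigma M -> R).
Hypothesis Hu : forall x, is_lub (backward_sums phi x) (u x).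

(** The empty backward orbit contributes [0]. *)
Lemma potential_nonneg x : 0 <= u x.
Proof. apply (Hu x). exists O, x. split; reflexivity. Qed.

Lemma potential_bounded B : (forall x r, backward_sums phi x r -> r <= B) -> bounded_S u.
Proof.
  intros HB. exists B. intros x.
  rewrite Rabs_right by (apply Rle_ge, potential_nonneg).
  apply (Hu x). intros r Hr. eauto.
Qed.

(** Extending a backward orbit of [x] by one step gives one of [sigma x]. *)
Lemma potential_subaction x : phi x + u x <= u (shift x).
Proof.
  assert (u x <= u (shift x) - phi x); [|lra].
  apply (Hu x). intros r [n [y [Hy ->]]].
  assert (bsum phi (S n) y <= u (shift x)).
  { apply (Hu (shift x)). exists (S n), y. split; [simpl; rewrite Hy|]; reflexivity. }
  rewrite bsum_S_r, Hy in H. lra.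
Qed.

(** Minimality: a non-negative [w] with [phi <= w o sigma - w] telescopes to
    [S_n phi y <= w (sigma^n y) - w y <= w (sigma^n y)]. *)
Lemma potential_minimal (w : Sigma M -> R) :
  (forall z, phi z <= w (shift z) - w z) -> (forall z, 0 <= w z) -> forall x, u x <= w x.
Proof.
  intros Hw Hw0 x. apply (Hu x). intros r [n [y [Hy ->]]].
  assert (Htel : forall m z, bsum phi m z <= w (itr m z) - w z).
  { induction m as [|m IH]; intros z; [simpl; lra|].
    rewrite itr_S'. simpl bsum. specialize (IH (shift z)). specialize (Hw z). lra. }
  specialize (Htel n y). rewrite Hy in Htel. specialize (Hw0 y). lra.
Qed.

Lemma potential_variation (W : nat -> R) k T : (1 <= k)%nat -> var_bounded phi W ->
  (forall n, fsum (fun j => W (k + 1 + j)%nat) n <= T) ->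
  forall x x', agree k x x' -> u x <= u x' + T.
Proof.
  intros Hk HW HT x x' Ha. apply (Hu x). intros r [n [y [Hy ->]]].
  destruct (extend_point y x x' n k Hk Hy Ha) as [y' [Hy' Hag]].
  assert (Hcomp := bsum_compare phi W k HW n y y' Hag).
  assert (bsum phi n y' <= u x') by (apply (Hu x'); exists n, y'; auto).
  specialize (HT n). lra.
Qed.

Lemma potential_unif_continuous (W : nat -> R) s : var_bounded phi W ->
  (forall m, (1 <= m)%nat -> 0 <= W m) -> infinite_sum (fun n => W (S n)) s ->
  unif_continuous_S u.
Proof.
  intros HW HW0 Hs eps Heps.
  destruct (summable_tail_small (fun n => W (S n)) s ltac:(intro; apply HW0; lia) Hs
              (eps / 2) ltac:(lra)) as [N HN].
  assert (HT : forall n, fsum (fun j => W (S N + 1 + j)%nat) n <= eps / 2).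
  { intros n. rewrite (fsum_ext _ (fun j => W (S (S N + j)))) by (intros; f_equal; lia).
    apply (HN (S N)). lia. }
  exists (S N). intros x y Ha.
  assert (h1 := potential_variation W (S N) _ ltac:(lia) HW HT x y Ha).
  assert (h2 := potential_variation W (S N) _ ltac:(lia) HW HT y x (agree_sym _ _ _ Ha)).
  apply Rabs_def1; lra.
Qed.

Lemma potential_var_le (W : nat -> R) k t : inhabited (Sigma M) -> (1 <= k)%nat ->
  var_bounded phi W -> (forall m, (1 <= m)%nat -> 0 <= W m) ->
  infinite_sum (fun n => W (k + n)%nat) t ->
  exists v, IsVar u k v /\ v <= t.
Proof.
  intros Hinh Hk HW HW0 Ht. apply IsVar_exists_le; [exact Hinh|].
  assert (HT : forall n, fsum (fun j => W (k + 1 + j)%nat) n <= t).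
  { intros n.
    assert (H := partial_le_lim (fun j => W (k + j)%nat) t ltac:(intros; apply HW0; lia) Ht (S n)).
    rewrite fsum_shift in H.
    rewrite (fsum_ext (fun i => W (k + S i)%nat) (fun j => W (k + 1 + j)%nat)) in H
      by (intros; f_equal; lia).
    assert (0 <= W (k + 0)%nat) by (apply HW0; lia). lra. }
  intros x y Ha. assert (H := potential_variation W k t Hk HW HT x y Ha). lra.
Qed.

End BackwardSupremum.

Theorem mainTheorem6
  (M : nat -> nat -> bool) (F : nat -> Prop) (K0 : nat)
  (HM : primitive_with M F K0)
  (A : Sigma M -> R)
  (HAc : continuous_S A)
  (HAup : exists C, forall x, A x <= C)
  (HAvar : exists V : nat -> R,
      (forall k, (1 <= k)%nat -> IsVar A k (V k)) /\
      exists s, infinite_sum (fun n => V (S n)) s)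
  (HAinf : exists c, forall x : Sigma M, F (coord x 0) -> c <= A x) :
  exists uA : Sigma M -> R,
    (forall x, 0 <= uA x) /\
    bounded_S uA /\
    unif_continuous_S uA /\
    sub_action A uA /\
    (forall u : Sigma M -> R, sub_action A u -> (forall x, 0 <= u x) ->
       forall x, uA x <= u x) /\
    (forall V : nat -> R, (forall k, (1 <= k)%nat -> IsVar A k (V k)) ->
       forall k, (1 <= k)%nat ->
       forall t, infinite_sum (fun n => V (k + n)%nat) t ->
       exists v, IsVar uA k v /\ v <= t).
Proof.
  destruct HAvar as [V0 [HV0 [s Hs]]], HAup as [Ca HCa], HAinf as [c Hc].
  assert (Hinh := IsVar_inhabited A 1 (V0 1%nat) (HV0 1%nat (le_n _))).
  assert (Hvar : forall V, (forall k, (1 <= k)%nat -> IsVar A k (V k)) ->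
            var_bounded A V /\ forall m, (1 <= m)%nat -> 0 <= V m).
  { intros V HV. split; intros m Hm; [apply IsVar_upper|apply (IsVar_nonneg A m)]; auto. }
  destruct (Hvar V0 HV0) as [HW HW0].
  assert (Hpart : forall n, fsum (fun j => V0 (S j)) n <= s)
    by (apply partial_le_lim; auto; intro; apply HW0; lia).
  (* A periodic orbit exists, so [beta_A] is a finite supremum [beta]. *)
  destruct Hinh as [x0].
  destruct (closing_lemma F K0 HM x0 1 (le_n _)) as [z0 [Hz0 _]].
  destruct (ergodic_max_exists A Ca HCa z0 (1 + K0) ltac:(lia) Hz0) as [beta Hbeta].
  set (phi := fun x => A x - beta).
  assert (Hbound := backward_sums_bounded F K0 HM A beta Ca c s V0
                      (periodic_birkhoff_le M A beta Hbeta Ca HCa) Hc HW Hpart).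
  destruct (backward_sup_exists phi _ Hbound) as [uA HuA].
  assert (Hunif := potential_unif_continuous M phi uA HuA V0 s
                     (var_bounded_sub_const A V0 beta HW) HW0 Hs).
  exists uA. split; [|split; [|split; [|split; [|split]]]].
  - exact (potential_nonneg M phi uA HuA).
  - exact (potential_bounded M phi uA HuA _ Hbound).
  - exact Hunif.
  - apply (sub_action_iff M A beta Hbeta). split.
    + intros x eps Heps. destruct (Hunif eps Heps) as [k Hk]. eauto.
    + intros x. assert (H := potential_subaction M phi uA HuA x). unfold phi in H. lra.
  - intros u Hu Hu0. apply (potential_minimal M phi uA HuA u); auto.
    apply (sub_action_iff M A beta Hbeta) in Hu. apply Hu.
  - intros V HV k Hk t Ht. destruct (Hvar V HV) as [HWV HV0p].
    exact (potential_var_le M phi uA HuA V k t (inhabits x0) Hk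
             (var_bounded_sub_const A V beta HWV) HV0p Ht).
Qed.
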